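(* Let $q$ be a prime power with $q\equiv 1 \pmod 3$, and let $\pi,\sigma$ be vertices of the graph $C_A(q)$, with $\sigma(x)=ax+r$ and $\pi(x)=bx+s$ ($a,b\in GF(q)\setminus\{0\}$, $r,s\in GF(q)$). (a) If $a\neq b$, then $hd(\pi,\sigma)=q-1$. (b) If $\pi(F)=F$, then $\pi$ is an isolated vertex of $C_A(q)$. There are exactly $q-1$ elements $\pi\in AGL(1,q)$ with $\pi(F)=F$. (c) If $\pi$ and $\sigma$ are adjacent in $C_A(q)$, then $hd(\pi,\sigma)=q-1$, $hd(\pi^{\triangle},\sigma^{\triangle})=hd(\pi,\sigma)-3$, and $a/b$ and $b/a$ are the two distinct roots in $GF(q)$ of $t^2+t+1=0$.
   Context: $AGL(1,q)=\{x\mapsto ax+b: a\in GF(q)\setminus\{0\}, b\in GF(q)\}$, acting on $GF(q)$. For permutations $\pi,\sigma$ of a finite set, $hd(\pi,\sigma)$ is the number of points at which they differ. Fix a distinguished element $F\in GF(q)$. For a permutation $\pi$ of $GF(q)$, $\pi^{\triangle}$ is the permutation with $\pi^{\triangle}(\pi^{-1}(F))=\pi(F)$, $\pi^{\triangle}(F)=F$, and $\pi^{\triangle}(x)=\pi(x)$ otherwise. The contraction graph $C_A(q)$ has vertex set $AGL(1,q)$, with distinct $\pi,\sigma$ adjacent iff $hd(\pi^{\triangle},\sigma^{\triangle})=q-4$. *)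

From HB Require Import structures.
From mathcomp Require Import all_boot all_order all_algebra all_fingroup all_field.
Set Implicit Arguments. Unset Strict Implicit. Unset Printing Implicit Defensive.
Import GRing.Theory.
Local Open Scope ring_scope.

Definition hd (T : finType) (f g : T -> T) : nat := #|[set x | f x != g x]|.

Definition is_affine (F : finFieldType) (p : {perm F}) : bool :=
  [exists a : F, exists b : F, (a != 0) && [forall x, p x == a * x + b]].

Definition tri (T : finType) (f0 : T) (p : {perm T}) (x : T) : T :=
  if x == f0 then f0 else if x == (p^-1)%g f0 then p f0 else p x.

Definition adjC (F : finFieldType) (f0 : F) (p s : {perm F}) : bool :=
  [&& is_affine p, is_affine s, p != s &
      hd (tri f0 p) (tri f0 s) == (#|F| - 4)%N].

(** Two distinct affine maps of GF(q) agree in at most one point, and in exactly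
    one when their slopes differ.  Contracting at F can create agreement only at
    F, at pi^-1(F) and at sigma^-1(F), so hd(pi^tri, sigma^tri) = q - 4 forces
    these three points to be distinct new agreements on top of one old one.  If
    pi fixes F the first two coincide, so pi is isolated; otherwise the new
    agreements say pi(F) = sigma(pi^-1 F) and sigma(F) = pi(sigma^-1 F), and
    eliminating the translation parts yields a^2 + ab + b^2 = 0. *)
From mathcomp Require Import all_boot all_order all_algebra all_fingroup all_field.
From mathcomp Require Import ring zify.
Set Implicit Arguments. Unset Strict Implicit.
Import GRing.Theory.
Local Open Scope ring_scope.

Definition agree (T : finType) (f g : T -> T) : {set T} := [set x | f x == g x].

Lemma hd_add_card_agree (T : finType) (f g : T -> T) :
  (hd f g + #|agree f g|)%N = #|T|.
Proof.
rewrite /hd; have -> : [set x | f x != g x] = ~: agree f g by apply/setP => x; rewrite !inE.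
by rewrite addnC cardsC.
Qed.

Section Contraction.

Variables (T : finType) (f0 : T) (p q : {perm T}).

Lemma agree_tri_sub :
  agree (tri f0 p) (tri f0 q) \subset
  f0 |: ((p^-1)%g f0 |: ((q^-1)%g f0 |: agree p q)).
Proof.
apply/subsetP => x; rewrite !inE /tri.
case: (x =P f0) => //= _; case: (x =P (p^-1)%g f0) => //= _.
by case: (x =P (q^-1)%g f0).
Qed.

Hypothesis agree_le1 : (#|agree p q| <= 1)%N.

Lemma card_agree_tri_fixed : p f0 = f0 -> (#|agree (tri f0 p) (tri f0 q)| <= 3)%N.
Proof.
move=> pf0; have pV : (p^-1)%g f0 = f0 by rewrite -{1}pf0 permK.
apply: leq_trans (subset_leq_card agree_tri_sub) _.
rewrite pV setUA setUid !cardsU1.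
by apply: leq_trans (leq_add (leq_b1 _) (leq_add (leq_b1 _) agree_le1)) _.
Qed.

Lemma card_agree_tri4 : #|agree (tri f0 p) (tri f0 q)| = 4%N ->
  [/\ (p^-1)%g f0 != f0, p f0 = q ((p^-1)%g f0), q f0 = p ((q^-1)%g f0)
    & #|agree p q| = 1%N].
Proof.
set u := (p^-1)%g f0; set v := (q^-1)%g f0 => card4.
have le4 := subset_leq_card agree_tri_sub; rewrite card4 !cardsU1 in le4.
have [nf nu nv agree1] : [/\ f0 \notin u |: (v |: agree p q),
    u \notin v |: agree p q, v \notin agree p q & #|agree p q| = 1%N].
  move: le4 agree_le1.
  by case: (_ \notin _); case: (_ \notin _); case: (_ \notin _) => /= *;
    try (exfalso; lia); split=> //; lia.
have agree_tri : agree (tri f0 p) (tri f0 q) = f0 |: (u |: (v |: agree p q)).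
  by apply/eqP; rewrite eqEcard agree_tri_sub card4 !cardsU1 nf nu nv agree1.
move: nf nu; rewrite !inE !negb_or => /and3P[fu fv _] /andP[uv _].
have /[!inE] : u \in agree (tri f0 p) (tri f0 q) by rewrite agree_tri !inE eqxx orbT.
have /[!inE] : v \in agree (tri f0 p) (tri f0 q) by rewrite agree_tri !inE eqxx !orbT.
rewrite /tri -/u -/v ![_ == f0]eq_sym (negbTE fu) (negbTE fv) [v == u]eq_sym (negbTE uv) !eqxx.
by move=> /eqP qf0 /eqP pf0; split.
Qed.

End Contraction.

Section AffinePair.

Variables (F : finFieldType) (p q : {perm F}) (a b r s : F).
Hypotheses (p_affine : forall x, p x = b * x + s) (q_affine : forall x, q x = a * x + r).

Lemma affine_eq_of_agree x : a = b -> p x = q x -> p = q.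
Proof.
move=> ab; rewrite p_affine q_affine ab => /addrI sr.
by apply/permP => y; rewrite p_affine q_affine ab sr.
Qed.

Lemma agree_affine_slope_neq : a != b -> agree p q = [set (r - s) / (b - a)].
Proof.
move=> ab; have ba : b - a != 0 by rewrite subr_eq0 eq_sym.
apply/setP => x; rewrite !inE p_affine q_affine -subr_eq0.
have -> : b * x + s - (a * x + r) = (b - a) * (x - (r - s) / (b - a)) by field.
by rewrite mulf_eq0 (negbTE ba) subr_eq0.
Qed.

Lemma card_agree_affine_le1 : p != q -> (#|agree p q| <= 1)%N.
Proof.
move=> pq; case: (eqVneq a b) => [ab | ab]; last by rewrite agree_affine_slope_neq // cards1.
apply/card_le1_eqP => x y; rewrite inE => /eqP /(affine_eq_of_agree ab) epq.
by rewrite epq eqxx in pq.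
Qed.

Lemma hd_affine_slope_neq : a != b -> hd p q = (#|F| - 1)%N.
Proof.
by move=> ab; rewrite -(hd_add_card_agree p q) agree_affine_slope_neq // cards1 addnK.
Qed.

Lemma slope_neq_of_agree1 : #|agree p q| = 1%N -> p != q -> a != b.
Proof.
move=> agree1; apply: contra_neq => ab.
have /card_gt0P[x] : (0 < #|agree p q|)%N by rewrite agree1.
by rewrite inE => /eqP; apply: affine_eq_of_agree ab.
Qed.

End AffinePair.

Lemma is_affineP (F : finFieldType) (p : {perm F}) :
  reflect (exists c d, c != 0 /\ forall x, p x = c * x + d) (is_affine p).
Proof.
apply: (iffP existsP) => [[c /existsP[d /andP[c0 /forallP pE]]] | [c [d [c0 pE]]]].
  by exists c, d; split=> // x; apply/eqP.
by exists c; apply/existsP; exists d; rewrite c0; apply/forallP => x; rewrite pE.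
Qed.

Section Dilations.

Variables (F : finFieldType) (f0 : F).

Lemma dilation_inj (u : {unit F}) : injective (fun x => val u * (x - f0) + f0).
Proof. by move=> x y /addIr /(mulrI (valP u)) /addIr. Qed.

Definition dilation (u : {unit F}) : {perm F} := perm (@dilation_inj u).

Lemma dilationE u x : dilation u x = val u * (x - f0) + f0.
Proof. by rewrite permE. Qed.

Lemma dilation_injective : injective dilation.
Proof.
move=> u v /(congr1 (fun p : {perm F} => p (1 + f0))).
by rewrite !dilationE addrK !mulr1 => /addIr /val_inj.
Qed.

Lemma affine_fixing_dilations :
  [set p | is_affine p && (p f0 == f0)] = dilation @: setT.
Proof.
apply/setP => p; rewrite inE; apply/andP/imsetP.
  case=> /is_affineP[c [d [c0 pE]]] /eqP; rewrite pE => pf0.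
  have cU : c \is a GRing.unit by rewrite unitfE.
  exists (Sub c cU : {unit F}) => //; apply/permP => x.
  rewrite dilationE SubK pE; transitivity (c * (x - f0) + (c * f0 + d)); first ring.
  by rewrite pf0.
case=> u _ ->; split; last by rewrite dilationE subrr mulr0 add0r.
apply/is_affineP; exists (val u), (f0 - val u * f0); split.
  by rewrite -unitfE; apply: valP.
by move=> x; rewrite dilationE; ring.
Qed.

Lemma card_affine_fixing :
  #|[set p : {perm F} | is_affine p && (p f0 == f0)]| = (#|F| - 1)%N.
Proof.
rewrite affine_fixing_dilations card_imset ?card_finField_unit ?subn1 //.
exact: dilation_injective.
Qed.

End Dilations.

Lemma crossing_affine_slopes (R : idomainType) (a b r s f0 u v : R) :
  b * u + s = f0 -> a * v + r = f0 -> b * f0 + s = a * u + r ->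
  a * f0 + r = b * v + s -> u != f0 -> a ^+ 2 + a * b + b ^+ 2 = 0.
Proof.
move=> e1 e2 e3 e4 uf0.
have key : (a ^+ 2 + a * b + b ^+ 2) * (u - f0) =
    - (a + b) * ((b * f0 + s) - (a * u + r)) + a * ((b * v + s) - (a * f0 + r))
    + b * ((b * u + s - f0) - (a * v + r - f0)) by ring.
move: key; rewrite e1 e2 e3 e4 !subrr !mulr0 !addr0 => /eqP.
by rewrite mulf_eq0 subr_eq0 (negbTE uf0) orbF => /eqP.
Qed.

Lemma ratio_root_of_sqr_add_mul (R : fieldType) (a b : R) :
  b != 0 -> a ^+ 2 + a * b + b ^+ 2 = 0 -> (a / b) ^+ 2 + a / b + 1 = 0.
Proof.
move=> b0 Q; transitivity ((a ^+ 2 + a * b + b ^+ 2) / b ^+ 2); first by field.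
by rewrite Q mul0r.
Qed.

Lemma ratio_neq_inv_of_sqr_add_mul (R : fieldType) (a b : R) :
  a != 0 -> b != 0 -> a != b -> a ^+ 2 + a * b + b ^+ 2 = 0 -> a / b != b / a.
Proof.
move=> a0 b0 ab Q; apply/eqP => e.
have apb : a + b = 0.
  have : (a - b) * (a + b) = (a / b - b / a) * (a * b) by field; rewrite a0 b0.
  by rewrite e subrr mul0r => /eqP; rewrite mulf_eq0 subr_eq0 (negbTE ab) => /eqP.
have : b ^+ 2 = a ^+ 2 + a * b + b ^+ 2 - a * (a + b) by ring.
by rewrite Q apb mulr0 subrr => /eqP; rewrite expf_eq0 (negbTE b0).
Qed.

Lemma adjC_card_agree_tri (F : finFieldType) (f0 : F) (p q : {perm F}) :
  (#|F| %% 3 = 1)%N -> adjC f0 p q -> #|agree (tri f0 p) (tri f0 q)| = 4%N.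
Proof.
move=> hq /and4P[_ _ _ /eqP hd4].
have : (1 < #|F|)%N := card_finNzRing_gt1 F.
have := hd_add_card_agree (tri f0 p) (tri f0 q); rewrite hd4.
by move: hq; set n := #|F|; lia.
Qed.

Lemma affine_fixing_isolated (F : finFieldType) (f0 : F) (p : {perm F}) (b s : F) :
  (#|F| %% 3 = 1)%N -> (forall x, p x = b * x + s) -> p f0 = f0 ->
  forall tau : {perm F}, ~~ adjC f0 p tau.
Proof.
move=> hq p_affine pf0 tau; apply/negP => adj.
have /and4P[_ /is_affineP[c [d [_ tau_affine]]] ptau _] := adj.
have := card_agree_tri_fixed (card_agree_affine_le1 p_affine tau_affine ptau) pf0.
by rewrite (adjC_card_agree_tri hq adj).
Qed.

Lemma adjC_affine_slopes (F : finFieldType) (f0 : F) (pi sigma : {perm F}) (a b r s : F) :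
  (#|F| %% 3 = 1)%N -> a != 0 -> b != 0 ->
  (forall x, sigma x = a * x + r) -> (forall x, pi x = b * x + s) ->
  adjC f0 pi sigma ->
  [/\ hd pi sigma = (#|F| - 1)%N,
      hd (tri f0 pi) (tri f0 sigma) = (hd pi sigma - 3)%N,
      (a / b) ^+ 2 + a / b + 1 = 0,
      (b / a) ^+ 2 + b / a + 1 = 0 &
      a / b != b / a].
Proof.
move=> hq a0 b0 hsig hpi adj; have /and4P[_ _ pq /eqP hd4] := adj.
have agree_le1 := card_agree_affine_le1 hpi hsig pq.
have [uf0 pf0 sf0 agree1] := card_agree_tri4 agree_le1 (adjC_card_agree_tri hq adj).
have ab := slope_neq_of_agree1 hpi hsig agree1 pq.
have Q : a ^+ 2 + a * b + b ^+ 2 = 0.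
  apply: (crossing_affine_slopes (r := r) (s := s) (u := (pi^-1)%g f0)
           (v := (sigma^-1)%g f0)) uf0; by rewrite -?hpi -?hsig ?permKV.
have hd1 := hd_affine_slope_neq hpi hsig ab.
split=> //; first by rewrite hd4 hd1 -subnDA.
- exact: ratio_root_of_sqr_add_mul.
- by apply: ratio_root_of_sqr_add_mul => //; rewrite -Q; ring.
- exact: ratio_neq_inv_of_sqr_add_mul.
Qed.

Theorem lemma4 (F : finFieldType) (f0 : F) (hq : (#|F| %% 3 = 1)%N)
    (pi sigma : {perm F}) (a b r s : F) (ha : a != 0) (hb : b != 0)
    (hsig : forall x, sigma x = a * x + r) (hpi : forall x, pi x = b * x + s) :
  (* (a) *)
  (a != b -> hd pi sigma = (#|F| - 1)%N) /\
  (* (b) *)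
  ((pi f0 = f0 -> forall tau : {perm F}, ~~ adjC f0 pi tau) /\
   #|[set p : {perm F} | is_affine p && (p f0 == f0)]| = (#|F| - 1)%N) /\
  (* (c) *)
  (adjC f0 pi sigma ->
     [/\ hd pi sigma = (#|F| - 1)%N,
         hd (tri f0 pi) (tri f0 sigma) = (hd pi sigma - 3)%N,
         (a / b) ^+ 2 + a / b + 1 = 0,
         (b / a) ^+ 2 + b / a + 1 = 0 &
         a / b != b / a]).
Proof.
split; first exact: hd_affine_slope_neq hpi hsig.
split; first split.
- exact: affine_fixing_isolated hq hpi.
- exact: card_affine_fixing.
- exact: adjC_affine_slopes.
Qed.
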